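(* Let $a>0$, $\eta\in(0,1)$ and $f\in\mathcal C_a$, and define $f^{\pm\eta}(s)=(1\pm\frac\eta2)f\big(s/(1\pm\frac\eta2)\big)$. Then: (1) $f^{\pm\eta}\in\mathcal C_{(2\pm\eta)a/2}$; (2) $(f^{\pm\eta})'(s)=f'\big(s/(1\pm\frac\eta2)\big)$ for all $s\in\mathbb R$; (3) $f^{+\eta}-f$ and $f-f^{-\eta}$ are decreasing on $\mathbb R_{\ge0}$; (4) $f^{-\eta}(s)\le f(s)\le f^{+\eta}(s)$ for all $s\in\mathbb R$, with $f^{-\eta}(s)=f(s)$ if and only if $|s|\ge a$, and $f^{+\eta}(s)=f(s)$ if and only if $|s|\ge(2+\eta)a/2$; (5) $\|f-f^{\pm\eta}\|_\infty=\frac\eta2f(0)$.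
   Context: For $b>0$, $\mathcal C_b$ is the set of $C^1$ functions $f:\mathbb R\to\mathbb R$ that are even, satisfy $f(s)=|s|$ for $|s|\ge b$ and are strictly convex on $[-b,b]$. Statements with $\pm$ hold for both signs. *)

From Stdlib Require Import Reals.
From Coquelicot Require Import Coquelicot.
Open Scope R_scope.

Definition C1 (f : R -> R) : Prop :=
  forall x, ex_derive f x /\ continuous (Derive f) x.

Definition even_fun (f : R -> R) : Prop := forall s, f (- s) = f s.

Definition strictly_convex_on (a b : R) (f : R -> R) : Prop :=
  forall x y t, a <= x <= b -> a <= y <= b -> x <> y -> 0 < t < 1 ->
    f (t * x + (1 - t) * y) < t * f x + (1 - t) * f y.

Definition classC (b : R) (f : R -> R) : Prop :=
  C1 f /\ even_fun f /\ (forall s, b <= Rabs s -> f s = Rabs s)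
  /\ strictly_convex_on (- b) b f.

Definition fpm (sigma eta : R) (f : R -> R) (s : R) : R :=
  (1 + sigma * eta / 2) * f (s / (1 + sigma * eta / 2)).

Definition decreasing_on_nonneg (g : R -> R) : Prop :=
  forall x y, 0 <= x -> x <= y -> g y <= g x.

Definition sup_norm_eq (g : R -> R) (m : R) : Prop :=
  is_lub (fun y => exists s, y = Rabs (g s)) m.

From Stdlib Require Import Reals Lra.
From Coquelicot Require Import Coquelicot.
Open Scope R_scope.

(* Write f_c := dilate c f, so that f^{+eta} = f_{1+eta/2}, f^{-eta} = f_{1-eta/2} and
   f_1 = f.  On [-a, a] convexity makes f' nondecreasing; outside, f' = sgn, so f' is
   nondecreasing on all of R with |f'| <= 1, and f lies above each of its tangent lines l_y.
   For y = s/c1 and x = s/c2,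
     f_{c2} s - f_{c1} s = c2 (f - l_y)(x) + (c2 - c1) l_y(0),
   where l_y(0) = f y - y f'(y) >= |y| - |y| = 0.  Hence c |-> f_c s is nondecreasing, and
   strictly so while |x| < a, where f lies strictly above its tangents (or s = 0 and
   l_y(0) = f 0 > 0).  Evaluating l_x at y and at 0 bounds the same difference by
   (c2 - c1) f 0, with equality at s = 0; this is the sup-norm identity.  Finally
   (f_{c2} - f_{c1})' s = f'(s/c2) - f'(s/c1) <= 0 for s >= 0 gives the monotonicity claims. *)

Definition convex_on (p q : R) (f : R -> R) : Prop :=
  forall x y t, p <= x <= q -> p <= y <= q -> 0 < t < 1 ->
    f (t * x + (1 - t) * y) <= t * f x + (1 - t) * f y.

Lemma is_derive_right_affine f x d k :
  is_derive f x d -> (forall h, 0 < h -> f (x + h) = f x + k * h) -> d = k.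
Proof.
  intros Hd Hlin. apply is_derive_Reals in Hd.
  apply cond_eq. intros eps Heps.
  destruct (Hd eps Heps) as [delta Hdelta].
  assert (Hpos := cond_pos delta).
  specialize (Hdelta (delta / 2) ltac:(lra) ltac:(rewrite Rabs_pos_eq; lra)).
  rewrite Hlin in Hdelta by lra.
  replace ((f x + k * (delta / 2) - f x) / (delta / 2) - d) with (- (d - k))
    in Hdelta by (field; lra).
  rewrite Rabs_Ropp in Hdelta. exact Hdelta.
Qed.

Lemma convex_on_tangent p q f x y d :
  convex_on p q f -> p <= x <= q -> p <= y <= q -> is_derive f x d ->
  f x + d * (y - x) <= f y.
Proof.
  intros Hconv Hx Hy Hd.
  destruct (Req_dec y x) as [->|Hyx]; [lra|].
  cut (d * (y - x) <= f y - f x); [lra|].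
  apply Rle_plus_epsilon. intros eps Heps.
  assert (Hdist : 0 < Rabs (y - x)) by (apply Rabs_pos_lt; lra).
  apply is_derive_Reals in Hd.
  destruct (Hd (eps / Rabs (y - x)) ltac:(apply Rdiv_lt_0_compat; lra))
    as [delta Hdelta].
  assert (Hpos := cond_pos delta).
  set (t := Rmin (1 / 2) (delta / (2 * Rabs (y - x)))).
  assert (Ht : 0 < t <= 1 / 2).
  { split; [apply Rmin_pos; [lra | apply Rdiv_lt_0_compat; lra] | apply Rmin_l]. }
  assert (Htdist : t * Rabs (y - x) < delta).
  { apply Rle_lt_trans with (delta / (2 * Rabs (y - x)) * Rabs (y - x)).
    - apply Rmult_le_compat_r; [lra | apply Rmin_r].
    - replace (delta / (2 * Rabs (y - x)) * Rabs (y - x)) with (delta / 2)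
        by (field; lra). lra. }
  set (h := t * (y - x)).
  assert (Hh : h <> 0) by (apply Rmult_integral_contrapositive; split; lra).
  specialize (Hdelta h Hh ltac:(unfold h; rewrite Rabs_mult, Rabs_pos_eq; lra)).
  set (slope := (f (x + h) - f x) / h) in Hdelta.
  assert (Hchord : slope * (y - x) <= f y - f x).
  { assert (Hstep : f (x + h) <= t * f y + (1 - t) * f x).
    { replace (x + h) with (t * y + (1 - t) * x) by (unfold h; ring). apply Hconv; lra. }
    replace (slope * (y - x)) with ((f (x + h) - f x) / t) by (unfold slope, h; field; lra).
    apply Rmult_le_reg_r with t; [lra|].
    replace ((f (x + h) - f x) / t * t) with (f (x + h) - f x) by (field; lra). lra. }
  assert (Herr : Rabs ((d - slope) * (y - x)) <= eps).
  { rewrite Rabs_mult, Rabs_minus_sym.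
    replace eps with (eps / Rabs (y - x) * Rabs (y - x)) by (field; lra).
    apply Rmult_le_compat_r; lra. }
  pose proof (Rle_abs ((d - slope) * (y - x))). lra.
Qed.

Lemma strictly_convex_on_convex_on p q f :
  strictly_convex_on p q f -> convex_on p q f.
Proof.
  intros Hf x y t Hx Hy Ht.
  destruct (Req_dec x y) as [<-|Hxy].
  - replace (t * x + (1 - t) * x) with x by ring. lra.
  - left. apply Hf; assumption.
Qed.

Lemma strictly_convex_on_tangent p q f x y d :
  strictly_convex_on p q f -> p <= x <= q -> p <= y <= q -> x <> y ->
  is_derive f y d -> f y + d * (x - y) < f x.
Proof.
  intros Hf Hx Hy Hxy Hd.
  assert (Hmid := Hf x y (1 / 2) Hx Hy Hxy ltac:(lra)).
  assert (Htan := convex_on_tangent p q f y (1 / 2 * x + (1 - 1 / 2) * y) d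
                    (strictly_convex_on_convex_on p q f Hf) Hy ltac:(lra) Hd).
  lra.
Qed.

Lemma is_derive_even f x d :
  even_fun f -> is_derive f x d -> is_derive f (- x) (- d).
Proof.
  intros Heven Hd.
  apply (is_derive_ext (fun t => f (- t))); [intros t; apply Heven|].
  replace (- d) with (scal (-1) d) by (unfold scal; simpl; unfold mult; simpl; ring).
  apply (is_derive_comp f Ropp).
  - rewrite Ropp_involutive. exact Hd.
  - auto_derive; [exact I | ring].
Qed.

Lemma continuity_pt_of_is_derive f x d : is_derive f x d -> continuity_pt f x.
Proof.
  intros Hd. apply continuity_pt_filterlim.
  apply (@ex_derive_continuous R_AbsRing R_NormedModule). exists d. exact Hd.
Qed.

Lemma tangent_of_nondecreasing_derive f df x y :
  (forall t, is_derive f t (df t)) -> (forall s t, s <= t -> df s <= df t) ->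
  f y + df y * (x - y) <= f x.
Proof.
  intros Hd Hmono.
  destruct (MVT_gen f y x df) as [z [Hz Hmvt]].
  - intros t _. apply Hd.
  - intros t _. apply (continuity_pt_of_is_derive f t (df t)), Hd.
  - destruct (Rle_or_lt y x) as [Hyx|Hxy].
    + rewrite Rmin_left, Rmax_right in Hz by lra.
      assert (df y <= df z) by (apply Hmono; lra). nra.
    + rewrite Rmin_right, Rmax_left in Hz by lra.
      assert (df z <= df y) by (apply Hmono; lra). nra.
Qed.

Lemma decreasing_on_nonneg_of_derive g dg :
  (forall t, is_derive g t (dg t)) -> (forall t, 0 <= t -> dg t <= 0) ->
  decreasing_on_nonneg g.
Proof.
  intros Hd Hneg x y Hx Hxy.
  destruct (MVT_gen g x y dg) as [z [Hz Hmvt]].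
  - intros t _. apply Hd.
  - intros t _. apply (continuity_pt_of_is_derive g t (dg t)), Hd.
  - rewrite Rmin_left, Rmax_right in Hz by lra.
    assert (dg z <= 0) by (apply Hneg; lra). nra.
Qed.

Definition dilate (c : R) (f : R -> R) (s : R) : R := c * f (s / c).

Lemma fpm_dilate sigma eta f : fpm sigma eta f = dilate (1 + sigma * eta / 2) f.
Proof. reflexivity. Qed.

Lemma dilate_1 f s : dilate 1 f s = f s.
Proof. unfold dilate. rewrite Rmult_1_l. f_equal. field. Qed.

Lemma is_derive_dilate c f s d :
  c <> 0 -> is_derive f (s / c) d -> is_derive (dilate c f) s d.
Proof.
  intros Hc Hd. unfold dilate.
  replace d with (c * scal (/ c) d) by (unfold scal; simpl; unfold mult; simpl; field; exact Hc).
  apply is_derive_scal, (is_derive_comp f (fun t => t / c)); [exact Hd|].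
  auto_derive; [exact I | field; exact Hc].
Qed.

Lemma dilate_sub_dilate f c1 c2 s D : c1 <> 0 -> c2 <> 0 ->
  dilate c2 f s - dilate c1 f s =
  c2 * (f (s / c2) - (f (s / c1) + D * (s / c2 - s / c1)))
  + (c2 - c1) * (f (s / c1) - D * (s / c1)).
Proof. intros Hc1 Hc2. unfold dilate. field. split; assumption. Qed.

Lemma sup_norm_eq_attained g m s0 :
  (forall s, Rabs (g s) <= m) -> Rabs (g s0) = m -> sup_norm_eq g m.
Proof.
  intros Hbound Hs0. split.
  - intros y [s ->]. apply Hbound.
  - intros b Hb. rewrite <- Hs0. apply Hb. exists s0. reflexivity.
Qed.

Section ClassC.

Variables (a : R) (f : R -> R).
Hypotheses (Ha : 0 < a) (Hf : classC a f).

Lemma is_derive_classC x : is_derive f x (Derive f x).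
Proof. apply Derive_correct, (proj1 Hf x). Qed.

Lemma classC_abs s : a <= Rabs s -> f s = Rabs s.
Proof. apply (proj1 (proj2 (proj2 Hf))). Qed.

Lemma classC_right y : a <= y -> f y = y.
Proof. intros Hy. rewrite classC_abs; rewrite Rabs_pos_eq; lra. Qed.

Lemma classC_left y : y <= - a -> f y = - y.
Proof. intros Hy. rewrite classC_abs; rewrite Rabs_left; lra. Qed.

Lemma Derive_classC_right y : a <= y -> Derive f y = 1.
Proof.
  intros Hy. apply (is_derive_right_affine f y); [apply is_derive_classC|].
  intros h Hh. rewrite !classC_right by lra. lra.
Qed.

Lemma Derive_classC_left y : y <= - a -> Derive f y = -1.
Proof.
  intros Hy. rewrite <- (Ropp_involutive y).
  rewrite (is_derive_unique f (- - y) (- Derive f (- y))).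
  - rewrite Derive_classC_right; lra.
  - apply is_derive_even; [apply Hf | apply is_derive_classC].
Qed.

Lemma strictly_convex_on_classC : strictly_convex_on (- a) a f.
Proof. apply Hf. Qed.

Lemma convex_on_classC : convex_on (- a) a f.
Proof. apply strictly_convex_on_convex_on, strictly_convex_on_classC. Qed.

Lemma Derive_classC_le_on x y : - a <= x -> x <= y -> y <= a ->
  Derive f x <= Derive f y.
Proof.
  intros Hx Hxy Hy.
  destruct (Req_dec x y) as [<-|Hne]; [lra|].
  assert (Htx := convex_on_tangent _ _ f x y _ convex_on_classC
                   ltac:(lra) ltac:(lra) (is_derive_classC x)).
  assert (Hty := convex_on_tangent _ _ f y x _ convex_on_classC
                   ltac:(lra) ltac:(lra) (is_derive_classC y)).
  nra.
Qed.

Lemma Derive_classC_bound y : -1 <= Derive f y <= 1.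
Proof.
  destruct (Rle_or_lt y (- a)) as [Hl|Hl].
  { rewrite Derive_classC_left; lra. }
  destruct (Rle_or_lt a y) as [Hr|Hr].
  { rewrite Derive_classC_right; lra. }
  rewrite <- (Derive_classC_left (- a)), <- (Derive_classC_right a) by lra.
  split; apply Derive_classC_le_on; lra.
Qed.

Lemma Derive_classC_nondecreasing x y : x <= y -> Derive f x <= Derive f y.
Proof.
  intros Hxy.
  assert (Hbx := Derive_classC_bound x). assert (Hby := Derive_classC_bound y).
  destruct (Rle_or_lt x (- a)) as [Hx|Hx].
  { rewrite Derive_classC_left; lra. }
  destruct (Rle_or_lt a y) as [Hy|Hy].
  { rewrite (Derive_classC_right y); lra. }
  apply Derive_classC_le_on; lra.
Qed.

Lemma classC_tangent x y : f y + Derive f y * (x - y) <= f x.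
Proof.
  apply tangent_of_nondecreasing_derive;
    [apply is_derive_classC | apply Derive_classC_nondecreasing].
Qed.

Lemma classC_ge_abs x : Rabs x <= f x.
Proof.
  assert (Hr := classC_tangent x a). assert (Hl := classC_tangent x (- a)).
  rewrite Derive_classC_right, classC_right in Hr by lra.
  rewrite Derive_classC_left, classC_left in Hl by lra.
  apply Rabs_le. lra.
Qed.

Lemma classC_gt_abs x : Rabs x < a -> Rabs x < f x.
Proof.
  intros Hx. apply Rabs_def2 in Hx.
  assert (Hr := strictly_convex_on_tangent _ _ f x a _ strictly_convex_on_classC
                  ltac:(lra) ltac:(lra) ltac:(lra) (is_derive_classC a)).
  assert (Hl := strictly_convex_on_tangent _ _ f x (- a) _ strictly_convex_on_classC
                  ltac:(lra) ltac:(lra) ltac:(lra) (is_derive_classC (- a))).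
  rewrite Derive_classC_right, classC_right in Hr by lra.
  rewrite Derive_classC_left, classC_left in Hl by lra.
  apply Rabs_def1; lra.
Qed.

Lemma classC_tangent_strict x y : Rabs x < a -> x <> y ->
  f y + Derive f y * (x - y) < f x.
Proof.
  intros Hx Hxy. assert (Hgt := Rabs_def2 _ _ (classC_gt_abs x Hx)).
  destruct (Rlt_or_le y (- a)) as [Hl|Hl].
  { rewrite Derive_classC_left, classC_left by lra. lra. }
  destruct (Rlt_or_le a y) as [Hr|Hr].
  { rewrite Derive_classC_right, classC_right by lra. lra. }
  apply Rabs_def2 in Hx.
  apply (strictly_convex_on_tangent (- a) a); try lra;
    [apply strictly_convex_on_classC | apply is_derive_classC].
Qed.

Lemma classC_tangent_intercept_nonneg y : 0 <= f y - Derive f y * y.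
Proof.
  assert (Hprod : Derive f y * y <= Rabs y).
  { apply Rle_trans with (Rabs (Derive f y * y)); [apply Rle_abs|].
    rewrite Rabs_mult. rewrite <- (Rmult_1_l (Rabs y)) at 2.
    apply Rmult_le_compat_r; [apply Rabs_pos|].
    apply Rabs_le, Derive_classC_bound. }
  assert (Hge := classC_ge_abs y). lra.
Qed.

Lemma classC_0_pos : 0 < f 0.
Proof. assert (H := classC_gt_abs 0). rewrite Rabs_R0 in H. apply H, Ha. Qed.

Lemma classC_dilate c : 0 < c -> classC (c * a) (dilate c f).
Proof.
  intros Hc. pose proof Hf as (HC1 & Heven & Habs & Hconv).
  assert (Hd : forall s, is_derive (dilate c f) s (Derive f (s / c))).
  { intros s. apply is_derive_dilate; [lra | apply is_derive_classC]. }
  split; [|split; [|split]].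
  - intros s. split; [exists (Derive f (s / c)); apply Hd|].
    apply (continuous_ext (fun t => Derive f (t / c))).
    { intros t. symmetry. apply is_derive_unique, Hd. }
    apply (continuous_comp (fun t => t / c) (Derive f)); [|apply HC1].
    apply (@ex_derive_continuous R_AbsRing R_NormedModule).
    auto_derive. exact I.
  - intros s. unfold dilate. rewrite <- Heven. f_equal. f_equal. field. lra.
  - intros s Hs. unfold dilate.
    assert (Hsc : Rabs (s / c) = Rabs s / c) by (rewrite Rabs_div, (Rabs_pos_eq c); lra).
    rewrite Habs, Hsc by (rewrite Hsc; apply Rle_div_r; lra).
    field. lra.
  - intros x y t Hx Hy Hxy Ht. unfold dilate.
    replace ((t * x + (1 - t) * y) / c) with (t * (x / c) + (1 - t) * (y / c)) by (field; lra).
    assert (Ex : x = c * (x / c)) by (field; lra).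
    assert (Ey : y = c * (y / c)) by (field; lra).
    set (u := x / c) in *. set (v := y / c) in *. clearbody u v. subst x y.
    assert (Huv : u <> v) by (intros ->; apply Hxy; reflexivity).
    assert (Hlt := Hconv u v t ltac:(nra) ltac:(nra) Huv Ht). nra.
Qed.

Lemma dilate_abs c s : 0 < c -> c * a <= Rabs s -> dilate c f s = Rabs s.
Proof. intros Hc. apply (classC_dilate c Hc). Qed.

Lemma dilate_le_dilate c1 c2 s : 0 < c1 <= c2 -> dilate c1 f s <= dilate c2 f s.
Proof.
  intros Hc.
  assert (Hdecomp := dilate_sub_dilate f c1 c2 s (Derive f (s / c1)) ltac:(lra) ltac:(lra)).
  assert (Htan := classC_tangent (s / c2) (s / c1)).
  assert (Hint := classC_tangent_intercept_nonneg (s / c1)).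
  assert (0 <= c2 * (f (s / c2) - (f (s / c1) + Derive f (s / c1) * (s / c2 - s / c1))))
    by (apply Rmult_le_pos; lra).
  assert (0 <= (c2 - c1) * (f (s / c1) - Derive f (s / c1) * (s / c1)))
    by (apply Rmult_le_pos; lra).
  lra.
Qed.

Lemma dilate_lt_dilate c1 c2 s : 0 < c1 < c2 -> Rabs s < c2 * a ->
  dilate c1 f s < dilate c2 f s.
Proof.
  intros Hc Hs.
  destruct (Req_dec s 0) as [->|Hs0].
  { unfold dilate. rewrite !Rdiv_0_l. assert (H0 := classC_0_pos). nra. }
  assert (Hne : s / c2 <> s / c1).
  { intros E. assert (Hprod : s * (c1 - c2) = (s / c2 - s / c1) * (c1 * c2)) by (field; lra).
    rewrite E, Rminus_diag, Rmult_0_l in Hprod.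
    apply Rmult_integral in Hprod. lra. }
  assert (Hin : Rabs (s / c2) < a)
    by (rewrite Rabs_div, (Rabs_pos_eq c2) by lra; apply Rlt_div_l; lra).
  assert (Hdecomp := dilate_sub_dilate f c1 c2 s (Derive f (s / c1)) ltac:(lra) ltac:(lra)).
  assert (Htan := classC_tangent_strict (s / c2) (s / c1) Hin Hne).
  assert (Hint := classC_tangent_intercept_nonneg (s / c1)).
  assert (0 < c2 * (f (s / c2) - (f (s / c1) + Derive f (s / c1) * (s / c2 - s / c1))))
    by (apply Rmult_lt_0_compat; lra).
  assert (0 <= (c2 - c1) * (f (s / c1) - Derive f (s / c1) * (s / c1)))
    by (apply Rmult_le_pos; lra).
  lra.
Qed.

Lemma dilate_eq_dilate c1 c2 s : 0 < c1 < c2 ->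
  dilate c1 f s = dilate c2 f s <-> c2 * a <= Rabs s.
Proof.
  intros Hc. split.
  - intros E. destruct (Rle_or_lt (c2 * a) (Rabs s)) as [Hs|Hs]; [exact Hs|].
    assert (Hlt := dilate_lt_dilate c1 c2 s Hc Hs). lra.
  - intros Hs. rewrite !dilate_abs; try lra.
    apply Rle_trans with (c2 * a); [apply Rmult_le_compat_r|]; lra.
Qed.

Lemma dilate_sub_le c1 c2 s : 0 < c1 <= c2 ->
  dilate c2 f s - dilate c1 f s <= (c2 - c1) * f 0.
Proof.
  intros Hc. unfold dilate.
  set (x := s / c2). set (y := s / c1). set (D := Derive f x).
  assert (Hxy : D * (c1 * y) = D * (c2 * x)) by (unfold x, y; f_equal; field; lra).
  assert (Hty := classC_tangent y x). assert (Ht0 := classC_tangent 0 x). fold D in Hty, Ht0.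
  assert (c1 * (f x + D * (y - x)) <= c1 * f y) by (apply Rmult_le_compat_l; lra).
  assert ((c2 - c1) * (f x + D * (0 - x)) <= (c2 - c1) * f 0) by (apply Rmult_le_compat_l; lra).
  nra.
Qed.

Lemma Rabs_dilate_sub_le c1 c2 s : 0 < c1 -> 0 < c2 ->
  Rabs (dilate c1 f s - dilate c2 f s) <= Rabs (c1 - c2) * f 0.
Proof.
  intros Hc1 Hc2. destruct (Rle_or_lt c1 c2) as [Hc|Hc].
  - assert (Hle := dilate_le_dilate c1 c2 s ltac:(lra)).
    rewrite Rabs_minus_sym, (Rabs_minus_sym c1), !Rabs_pos_eq by lra.
    apply dilate_sub_le; lra.
  - assert (Hle := dilate_le_dilate c2 c1 s ltac:(lra)).
    rewrite !Rabs_pos_eq by lra.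
    apply dilate_sub_le; lra.
Qed.

Lemma sup_norm_sub_dilate c : 0 < c ->
  sup_norm_eq (fun s => f s - dilate c f s) (Rabs (c - 1) * f 0).
Proof.
  intros Hc. apply sup_norm_eq_attained with 0; cbv beta.
  - intros s. rewrite <- (dilate_1 f s), (Rabs_minus_sym c).
    apply Rabs_dilate_sub_le; lra.
  - unfold dilate. rewrite Rdiv_0_l.
    replace (f 0 - c * f 0) with ((1 - c) * f 0) by ring.
    rewrite Rabs_mult, (Rabs_pos_eq (f 0)), Rabs_minus_sym by (left; apply classC_0_pos).
    reflexivity.
Qed.

Lemma decreasing_dilate_sub c1 c2 : 0 < c1 <= c2 ->
  decreasing_on_nonneg (fun s => dilate c2 f s - dilate c1 f s).
Proof.
  intros Hc.
  apply (decreasing_on_nonneg_of_derive _ (fun t => Derive f (t / c2) - Derive f (t / c1))).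
  - intros t. apply (is_derive_minus (dilate c2 f) (dilate c1 f));
      apply is_derive_dilate; try lra; apply is_derive_classC.
  - intros t Ht.
    assert (t / c2 <= t / c1).
    { apply Rmult_le_compat_l; [exact Ht|]. apply Rinv_le_contravar; lra. }
    assert (Derive f (t / c2) <= Derive f (t / c1))
      by (apply Derive_classC_nondecreasing; assumption).
    lra.
Qed.

End ClassC.

Theorem lemma3p4 (a eta : R) (f : R -> R) :
  0 < a -> 0 < eta < 1 -> classC a f ->
  (forall sigma, sigma = 1 \/ sigma = -1 ->
     (* (1) *)
     classC ((2 + sigma * eta) * a / 2) (fpm sigma eta f)
     (* (2) *)
     /\ (forall s, is_derive (fpm sigma eta f) s
                     (Derive f (s / (1 + sigma * eta / 2))))
     (* (5) *)
     /\ sup_norm_eq (fun s => f s - fpm sigma eta f s) (eta / 2 * f 0))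
  (* (3) *)
  /\ decreasing_on_nonneg (fun s => fpm 1 eta f s - f s)
  /\ decreasing_on_nonneg (fun s => f s - fpm (-1) eta f s)
  (* (4) *)
  /\ (forall s, fpm (-1) eta f s <= f s /\ f s <= fpm 1 eta f s)
  /\ (forall s, fpm (-1) eta f s = f s <-> a <= Rabs s)
  /\ (forall s, fpm 1 eta f s = f s <-> (2 + eta) * a / 2 <= Rabs s).
Proof.
  intros Ha Heta Hf.
  split.
  { intros sigma Hsigma. rewrite fpm_dilate.
    assert (Hc : 0 < 1 + sigma * eta / 2) by (destruct Hsigma as [-> | ->]; lra).
    split; [|split].
    - replace ((2 + sigma * eta) * a / 2) with ((1 + sigma * eta / 2) * a) by field.
      apply classC_dilate; assumption.
    - intros s. apply is_derive_dilate; [lra | apply (is_derive_classC a), Hf].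
    - replace (eta / 2) with (Rabs (1 + sigma * eta / 2 - 1))
        by (destruct Hsigma as [-> | ->]; [rewrite Rabs_pos_eq | rewrite Rabs_left]; lra).
      apply (sup_norm_sub_dilate a); assumption. }
  rewrite !fpm_dilate.
  set (cp := 1 + 1 * eta / 2). set (cm := 1 + -1 * eta / 2).
  assert (Hcp : 1 < cp) by (unfold cp; lra). assert (Hcm : 0 < cm < 1) by (unfold cm; lra).
  split; [|split; [|split; [|split]]].
  - intros x y Hx Hxy. cbv beta. rewrite <- (dilate_1 f x), <- (dilate_1 f y).
    apply (decreasing_dilate_sub a f Ha Hf 1 cp); lra.
  - intros x y Hx Hxy. cbv beta. rewrite <- (dilate_1 f x), <- (dilate_1 f y).
    apply (decreasing_dilate_sub a f Ha Hf cm 1); lra.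
  - intros s. rewrite <- (dilate_1 f s). split; apply (dilate_le_dilate a); auto; lra.
  - intros s. rewrite <- (dilate_1 f s), <- (Rmult_1_l a).
    apply (dilate_eq_dilate a); auto; lra.
  - intros s. rewrite <- (dilate_1 f s).
    replace ((2 + eta) * a / 2) with (cp * a) by (unfold cp; field).
    rewrite <- (dilate_eq_dilate a f Ha Hf 1 cp s) by lra.
    split; apply eq_sym.
Qed.
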